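(* Let $(M,d)$ be a complete metric space and $X\subseteq M$ compact. Assume that every $\mu\in P(X)$ admits a barycenter in $M$, and that $conv(X)$ is compact. Assume moreover that at least one variance maximizing probability measure $\mu\in P(X)$ (i.e. a maximizer of $Var$ over $P(X)$) has a unique barycenter. Then the circumradius of $X$ in $M$ equals the circumradius of $i(X)$ in $(P(M),W_2)$.
   Context: $P(\cdot)$ denotes Borel probability measures. $Var(\mu)=\inf_{y\in M}\int_X d^2(x,y)\,d\mu(x)$, and a barycenter of $\mu$ is a point of $M$ attaining this infimum; $conv(X)$ is the set of all barycenters of measures in $P(X)$. The circumradius of $X$ in $M$ is $\inf_{y\in M}\sup_{x\in X}d(x,y)$. $W_2$ is the Wasserstein distance on $P(M)$, with $W_2^2(\delta_x,\nu)=\int_M d^2(x,y)\,d\nu(y)$; $i(x)=\delta_x$, and the circumradius of $i(X)$ is $\inf_{\nu\in P(M)}\sup_{x\in X}W_2(\delta_x,\nu)$. *)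

From HB Require Import structures.
From mathcomp Require Import all_boot all_order all_algebra.
From mathcomp Require Import all_classical all_reals all_analysis.
Set Implicit Arguments. Unset Strict Implicit. Unset Printing Implicit Defensive.
Import Order.TTheory GRing.Theory Num.Theory.
Local Open Scope classical_set_scope.
Local Open Scope ring_scope.

Notation borel T := (g_sigma_algebraType (@open T)).

(* Metric spaces equipped with a distinguished point (needed by the library to
   build the Borel sigma-algebra; harmless here since the hypotheses force
   X, hence M, to be nonempty). *)
#[short(type="pointedMetricType")]
HB.structure Definition PointedMetric (K : numDomainType) :=
  { M of Pointed M & Metric K M }.

Section barycenters.
Context {R : realType} {M : pointedMetricType R}.
Local Open Scope ereal_scope.

Definition complete_metric :=
  forall F : set_system M, ProperFilter F -> cauchy F -> exists x : M, F --> x.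

Notation PM := (probability (borel M) R).

Definition in_PX (X : set M) (mu : PM) : Prop := mu X = 1.

Definition sqdist_int (X : set M) (mu : PM) (y : M) : \bar R :=
  \int[mu]_(x in X) ((mdist (x : M) y) ^+ 2)%:E.

Definition Var_bary (X : set M) (mu : PM) : \bar R :=
  ereal_inf (range (sqdist_int X mu)).

Definition is_bary (X : set M) (mu : PM) (y : M) : Prop :=
  sqdist_int X mu y = Var_bary X mu.

Definition conv_bary (X : set M) : set M :=
  [set y | exists mu : PM, in_PX X mu /\ is_bary X mu y].

Definition circumradius (X : set M) : \bar R :=
  ereal_inf (range (fun y : M => ereal_sup [set (mdist x y)%:E | x in X])).

(* W_2(delta_x, nu) = sqrt (\int_M d^2(x,y) dnu(y)) *)
Definition W2_dirac (x : M) (nu : PM) : \bar R :=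
  sqrte (\int[nu]_y ((mdist x (y : M)) ^+ 2)%:E).

Definition circumradius_iX (X : set M) : \bar R :=
  ereal_inf (range (fun nu : PM => ereal_sup [set W2_dirac x nu | x in X])).

End barycenters.

(* Dirac masses give circumradius(i(X)) <= circumradius(X), since
   W_2(delta_x, delta_y) = d(x, y).  Conversely, let m maximize Var over P(X),
   with unique barycenter b, and let x0 be in X.  A barycenter y of
   (1 - t) m + t delta_x0 satisfies (1 - t) int d^2(., y) dm + t d^2(x0, y)
   <= Var m <= int d^2(., y) dm, hence d^2(x0, y) <= Var m.  As t -> 0 these
   barycenters cluster in the compact set conv(X) at a barycenter of m, that is
   at b; so d(x0, b)^2 <= Var m for all x0 in X.  Finally, if
   W_2(delta_x, nu) <= s on X, then Var m <= int int d^2(x, y) dm(x) dnu(y)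
   <= s^2; this is proved without Fubini by replacing m with its
   discretization on a finite e-net of X. *)

From HB Require Import structures.
From mathcomp Require Import all_boot all_order all_algebra.
From mathcomp Require Import all_classical all_reals all_analysis.
From mathcomp Require Import ring lra measurable_realfun.
Import Order.TTheory GRing.Theory Num.Theory.
Import numFieldTopology.Exports.
Local Open Scope classical_set_scope.
Local Open Scope ring_scope.

Section borel_measurability.
Context {T : ptopologicalType}.

Lemma open_borel (A : set T) : open A -> measurable (A : set (borel T)).
Proof. exact: sub_sigma_algebra. Qed.

Lemma closed_borel (A : set T) : closed A -> measurable (A : set (borel T)).
Proof.
move=> cA; rewrite -(setCK A); apply: measurableC.
by apply: open_borel; exact: closed_openC.
Qed.

Lemma continuous_borel_measurable {R : realType} (f : T -> R) (D : set T) :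
  measurable (D : set (borel T)) -> continuous f ->
  @measurable_fun _ _ (borel T) R D f.
Proof.
move=> mD /continuousP cf.
apply: (measurability _ (RGenOpens.measurableE R)) => _ [_ [a [b ->]] <-].
by apply: measurableI => //; apply: open_borel; apply: cf; exact: interval_open.
Qed.

Lemma compact_borel (A : set T) : hausdorff_space T -> compact A ->
  measurable (A : set (borel T)).
Proof. by move=> hT cA; apply: closed_borel; exact: compact_closed. Qed.

End borel_measurability.

Section real_inequalities.
Context {R : realType}.

Lemma sqr_le_shift (a' a e : R) : 0 <= a' -> 0 <= a -> 0 <= e -> a' <= a + e ->
  a' ^+ 2 <= (1 + e) * a ^+ 2 + (e + e ^+ 2).
Proof.
move=> a'0 a0 e0 h.
have h1 : a' ^+ 2 <= (a + e) ^+ 2 by rewrite ler_pXn2r// ?nnegrE// addr_ge0.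
have h2 : 2 * a <= a ^+ 2 + 1 by have := sqr_ge0 (a - 1); rewrite !expr2; nra.
apply: (le_trans h1); rewrite !expr2 in h2 *; nra.
Qed.

Lemma ler_add_small_mulr (a v c : R) : 0 <= c ->
  (forall d, 0 < d -> d <= 1 -> a <= v + d * c) -> a <= v.
Proof.
move=> c0 h; apply/ler_addgt0Pr => e e0.
pose d := Num.min 1 (e / (c + 1)).
have c10 : 0 < c + 1 by rewrite ltr_wpDl.
have d0 : 0 < d by rewrite lt_min ltr01 divr_gt0.
have d1 : d <= 1 by rewrite ge_min lexx.
apply: (le_trans (h d d0 d1)); rewrite lerD2l.
have : d <= e / (c + 1) by rewrite ge_min lexx orbT.
rewrite ler_pdivlMr// => hd; apply: le_trans hd.
by rewrite mulrDr mulr1 lerDl ltW.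
Qed.

Lemma ler_add_of_1Binv_mul_le (a v e : R) (n : nat) : 0 <= v -> 0 < e ->
  v / e < n%:R -> (1 - n.+2%:R^-1) * a <= v -> a <= v + e.
Proof.
have N0 : 0 <= n%:R :> R by [].
have N2 : 0 < n%:R + 2 :> R by rewrite ltr_wpDl.
have -> : 1 - n.+2%:R^-1 = (n%:R + 1) / (n%:R + 2) :> R.
  by rewrite -[n.+2]addn2 natrD; field; rewrite lt0r_neq0.
move=> v0 e0; rewrite ltr_pdivrMr// mulrAC ler_pdivrMr// => vn ha.
rewrite -(@ler_pM2l _ (n%:R + 1)) ?ltr_wpDl//; nra.
Qed.

End real_inequalities.

Section metric_topology.
Context {R : realType} {M : metricType R}.
Local Notation dist := (@mdist R M).

Lemma ler_norm_mdistB x y z : `|dist x y - dist z y| <= dist x z.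
Proof.
have := metric_triangle z x y; have := metric_triangle x z y.
rewrite (metric_sym z x) ler_norml => h1 h2.
by apply/andP; split; lra.
Qed.

Lemma continuous_mdistl y : continuous (dist ^~ y).
Proof.
move=> x; apply/cvgrPdist_lt => e e0.
apply: filterS (nbhsx_ballx x e e0) => z; rewrite ballEmdist /=.
exact: le_lt_trans (ler_norm_mdistB x y z).
Qed.

Lemma continuous_mdistr x : continuous (dist x).
Proof.
have -> : dist x = dist ^~ x by apply/funext => y; rewrite metric_sym.
exact: continuous_mdistl.
Qed.

Lemma open_mball x e : open [set y | dist x y < e].
Proof. exact: (proj1 (continuousP _) (continuous_mdistr x) _ (@open_lt R e)). Qed.

Lemma compact_mdist_bounded {X : set M} y : compact X ->
  exists B, forall x, X x -> dist x y <= B.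
Proof.
move=> cX.
have cdX : compact (dist ^~ y @` X).
  apply: continuous_compact => //.
  by apply: continuous_subspaceT => x; exact: continuous_mdistl.
have [B hB] := @filter_ex _ (pinfty_nbhs R) _ _ (compact_bounded cdX).
exists B => x Xx.
exact: le_trans (ler_norm _) (hB _ (ex_intro2 _ _ x Xx erefl)).
Qed.

Lemma mdist_sqr_shift x y z e : 0 < e -> dist y z < e ->
  dist x z ^+ 2 <= (1 + e) * dist x y ^+ 2 + (e + e ^+ 2).
Proof.
move=> e0 yz; apply: sqr_le_shift; rewrite ?mdist_ge0 ?(ltW e0)//.
by apply: le_trans (metric_triangle x y z) _; rewrite lerD2l ltW.
Qed.

Lemma cluster_seq_ball {y : nat -> M} {y0} : cluster (y @ \oo) y0 ->
  forall P : nat -> Prop, (\forall n \near \oo, P n) ->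
  forall e, 0 < e -> exists n, P n /\ dist y0 (y n) < e.
Proof.
move=> cl P hP e e0.
have [_ [[n Pn <-] yn]] := cl (y @` P) (ball y0 e)
  (filterS (fun n Pn => ex_intro2 _ _ n Pn erefl) hP) (nbhsx_ballx y0 e e0).
by exists n; rewrite ballEmdist in yn.
Qed.

Lemma cluster_le_of_lsc (g : M -> R) (y : nat -> M) y0 c : 0 <= c ->
  cluster (y @ \oo) y0 ->
  (forall e, 0 < e -> \forall n \near \oo, g (y n) <= c + e) ->
  (forall z e, 0 < e -> dist z y0 < e -> g y0 <= (1 + e) * g z + (e + e ^+ 2)) ->
  g y0 <= c.
Proof.
move=> c0 cl gc lsc; apply: (@ler_add_small_mulr _ _ _ (c + 4)) => [|e e0 e1].
  by rewrite addr_ge0.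
have [n [gn yn]] := cluster_seq_ball cl _ (gc e e0) _ e0.
rewrite metric_sym in yn; have := lsc _ _ e0 yn; rewrite expr2; nra.
Qed.

End metric_topology.

Section mixture.
Context {R : realType} {d} {T : measurableType d}.
Variables (mu nu : probability T R) (t : R) (t0 : 0 <= t) (t1 : t <= 1).

Let t1' : 0 <= 1 - t. Proof. by rewrite subr_ge0. Qed.

Definition mix_prob := measure_add (mscale (NngNum t1') mu) (mscale (NngNum t0) nu).

HB.instance Definition _ := Measure.on mix_prob.

Lemma mix_probE A : mix_prob A = ((1 - t)%:E * mu A + t%:E * nu A)%E.
Proof. by rewrite /mix_prob measure_addE. Qed.

Let mix_probT : mix_prob setT = 1%E.
Proof. by rewrite mix_probE !probability_setT !mule1 -EFinD subrK. Qed.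

HB.instance Definition _ := Measure_isProbability.Build _ _ _ mix_prob mix_probT.

Lemma ge0_integral_mix_prob (D : set T) (f : T -> \bar R) : measurable D ->
  (forall x, D x -> 0 <= f x)%E -> measurable_fun D f ->
  (\int[mix_prob]_(x in D) f x =
    (1 - t)%:E * \int[mu]_(x in D) f x + t%:E * \int[nu]_(x in D) f x)%E.
Proof.
move=> mD f0 mf; rewrite ge0_integral_measure_add//.
by rewrite !ge0_integral_mscale.
Qed.

End mixture.
Arguments mix_prob {R d T} mu nu {t} t0 t1.

Section integrals.
Context {R : realType} {d} {T : measurableType d}.
Local Open Scope ereal_scope.

Lemma ge0_integral_affine (mu : {measure set T -> \bar R}) (D : set T)
    (h : T -> R) (a b : R) :
  measurable D -> measurable_fun D h -> (forall x, D x -> (0 <= h x)%R) ->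
  (0 <= a)%R -> (0 <= b)%R ->
  \int[mu]_(x in D) (a * h x + b)%:E = a%:E * \int[mu]_(x in D) (h x)%:E + b%:E * mu D.
Proof.
move=> mD mh h0 a0 b0.
under eq_integral do rewrite EFinD EFinM.
rewrite ge0_integralD//; last 2 first.
- by move=> x Dx; rewrite lee_fin mulr_ge0// h0.
- by apply: measurable_funeM; exact/measurable_EFinP.
by rewrite ge0_integralZl_EFin//; [rewrite integral_cst | exact/measurable_EFinP].
Qed.

Lemma sum_indic_uniq {I : finType} {A : I -> set T} (a : I -> R) {x j} :
  (forall i, (x \in A i) = (i == j)) -> (\sum_i \1_(A i) x * a i)%R = a j.
Proof.
move=> h; rewrite (bigD1 j)//= big1 ?addr0; first by rewrite indicE h eqxx mul1r.
by move=> i ij; rewrite indicE h (negbTE ij) mul0r.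
Qed.

Lemma integral_sum_indic (mu : {finite_measure set T -> \bar R}) {D : set T}
    {I : finType} {A : I -> set T} (a : I -> R) :
  measurable D -> (forall i, measurable (A i)) -> (forall i, 0 <= a i)%R ->
  \int[mu]_(x in D) (\sum_i \1_(A i) x * a i)%:E =
    (\sum_i fine (mu (A i `&` D)) * a i)%:E.
Proof.
move=> mD mA a0; under eq_integral do rewrite -sumEFin.
have mind i : measurable_fun D (fun x => \1_(A i) x * a i)%R.
  by apply: measurable_funM => //; exact: measurable_indic.
rewrite ge0_integral_sum//; last 2 first.
- by move=> i; exact/measurable_EFinP.
- by move=> i x _; rewrite lee_fin mulr_ge0.
rewrite -sumEFin; apply: eq_bigr => i _.
under eq_integral do rewrite EFinM muleC.
rewrite ge0_integralZl_EFin//; last first.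
  exact/measurable_EFinP/measurable_indic.
rewrite integral_indic// EFinM fineK ?fin_num_measure//; first exact: muleC.
exact: measurableI.
Qed.

Lemma ge0_integral_convex_comb_le (mu : {measure set T -> \bar R}) {D : set T}
    {n} {p : 'I_n -> R} {g : 'I_n -> T -> R} {K : R} :
  measurable D -> (forall i, 0 <= p i)%R -> (\sum_i p i = 1)%R ->
  (forall i, measurable_fun D (g i)) -> (forall i x, D x -> 0 <= g i x)%R ->
  (forall i, \int[mu]_(x in D) (g i x)%:E <= K%:E) ->
  \int[mu]_(x in D) (\sum_i p i * g i x)%:E <= K%:E.
Proof.
move=> mD p0 p1 mg g0 gK; under eq_integral do rewrite -sumEFin.
rewrite ge0_integral_sum//; last 2 first.
- by move=> i; apply/measurable_EFinP; exact: measurable_funM.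
- by move=> i x Dx; rewrite lee_fin mulr_ge0// g0.
apply: (@le_trans _ _ (\sum_i (p i * K)%:E)); last first.
  by rewrite sumEFin -mulr_suml p1 mul1r.
apply: lee_sum => i _; under eq_integral do rewrite EFinM.
rewrite ge0_integralZl_EFin//; last 2 first.
- by move=> x Dx; rewrite lee_fin g0.
- exact/measurable_EFinP.
by rewrite EFinM lee_wpmul2l// lee_fin.
Qed.

Lemma le_integral_probability (P : probability T R) (v : R) (h : T -> R) :
  measurable_fun setT h -> (0 <= v)%R -> (forall x, v <= h x)%R ->
  v%:E <= \int[P]_x (h x)%:E.
Proof.
move=> mh v0 vh.
rewrite -[v%:E]mule1 -(probability_setT P) -integral_cst//.
apply: ge0_le_integral => //=; first exact/measurable_EFinP.
by move=> x _; rewrite lee_fin.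
Qed.

End integrals.

Section variance.
Context {R : realType} {M : pointedMetricType R}.
Local Notation dist := (@mdist R M).
Local Notation PM := (probability (borel M) R).
Local Notation dirac_at x := (@dirac _ (borel M) x R).
Variable X : set M.
Local Open Scope ereal_scope.

Lemma measurable_mdist_sqrl y (D : set M) : measurable (D : set (borel M)) ->
  @measurable_fun _ _ (borel M) R D (fun x => dist x y ^+ 2)%R.
Proof.
move=> mD; apply: measurable_funX.
by apply: continuous_borel_measurable => //; exact: continuous_mdistl.
Qed.

Lemma measurable_mdist_sqrr x (D : set M) : measurable (D : set (borel M)) ->
  @measurable_fun _ _ (borel M) R D (fun y => dist x y ^+ 2)%R.
Proof.
move=> mD; apply: measurable_funX.
by apply: continuous_borel_measurable => //; exact: continuous_mdistr.
Qed.

Lemma sqdist_int_ge0 (mu : PM) y : 0 <= sqdist_int X mu y.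
Proof. by apply: integral_ge0 => x _; rewrite lee_fin sqr_ge0. Qed.

Lemma Var_bary_le_sqdist_int (mu : PM) y : Var_bary X mu <= sqdist_int X mu y.
Proof. by apply: ereal_inf_lbound; exists y. Qed.

Lemma Var_bary_ge0 (mu : PM) : 0 <= Var_bary X mu.
Proof. by apply/ereal_infP => _ [y _ <-]; exact: sqdist_int_ge0. Qed.

Hypothesis cX : compact X.

Let mX : measurable (X : set (borel M)).
Proof. exact: compact_borel (@metric_hausdorff R M) cX. Qed.

Lemma sqdist_int_fin_num (mu : PM) y : sqdist_int X mu y \is a fin_num.
Proof.
have [B hB] := compact_mdist_bounded y cX.
rewrite ge0_fin_numE ?sqdist_int_ge0//.
apply: (@le_lt_trans _ _ (\int[mu]_(x in X) (cst (Num.max B 0 ^+ 2)%:E x))).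
  apply: ge0_le_integral => //.
  - by move=> x _; rewrite lee_fin sqr_ge0.
  - by apply/measurable_EFinP; exact: measurable_mdist_sqrl.
  - move=> x Xx; rewrite lee_fin ler_pXn2r ?nnegrE ?mdist_ge0 ?le_max ?lexx ?orbT//.
    by rewrite hB.
by rewrite integral_cst// ltey_eq fin_numM// fin_num_measure.
Qed.

Lemma Var_bary_fin_num (mu : PM) : Var_bary X mu \is a fin_num.
Proof.
rewrite ge0_fin_numE ?Var_bary_ge0//.
apply: le_lt_trans (Var_bary_le_sqdist_int mu point) _.
by rewrite ltey_eq sqdist_int_fin_num.
Qed.

Lemma sqdist_int_shift {mu : PM} {y y0} {e : R} : in_PX X mu -> (0 < e)%R ->
  (dist y y0 < e)%R ->
  sqdist_int X mu y0 <= (1 + e)%:E * sqdist_int X mu y + (e + e ^+ 2)%:E.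
Proof.
move=> PX e0 ye.
rewrite -[X in _ + X]mule1 -PX -ge0_integral_affine//; last 4 first.
- exact: measurable_mdist_sqrl.
- by move=> x _; exact: sqr_ge0.
- by rewrite addr_ge0// ltW.
- by rewrite addr_ge0 ?sqr_ge0// ltW.
apply: ge0_le_integral => //.
- by move=> x _; rewrite lee_fin sqr_ge0.
- by apply/measurable_EFinP; exact: measurable_mdist_sqrl.
- apply/measurable_EFinP; apply: measurable_funD => //.
  by apply: measurable_funM => //; exact: measurable_mdist_sqrl.
by move=> x Xx; rewrite lee_fin mdist_sqr_shift.
Qed.

Lemma in_PX_mix_dirac {mu : PM} {x0 t} (t0 : (0 <= t)%R) (t1 : (t <= 1)%R) :
  in_PX X mu -> X x0 -> in_PX X (mix_prob mu (dirac_at x0) t0 t1).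
Proof.
move=> PX Xx0; rewrite /in_PX.
transitivity ((1 - t)%:E * mu X + t%:E * dirac_at x0 X); first exact: mix_probE.
by rewrite PX diracE mem_set// !mule1 -EFinD subrK.
Qed.

Lemma sqdist_int_mix_dirac (mu : PM) {x0 t} (t0 : (0 <= t)%R) (t1 : (t <= 1)%R) y :
  X x0 -> sqdist_int X (mix_prob mu (dirac_at x0) t0 t1) y =
    (1 - t)%:E * sqdist_int X mu y + t%:E * (dist x0 y ^+ 2)%:E.
Proof.
move=> Xx0.
have md2 : @measurable_fun _ _ (borel M) _ X (fun x => (dist x y ^+ 2)%:E).
  by apply/measurable_EFinP; exact: measurable_mdist_sqrl.
rewrite /sqdist_int ge0_integral_mix_prob//; last by move=> x _; rewrite lee_fin sqr_ge0.
by rewrite integral_dirac// diracE mem_set// mul1e.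
Qed.

End variance.

Section variance_maximizer.
Context {R : realType} {M : pointedMetricType R}.
Local Notation dist := (@mdist R M).
Local Notation PM := (probability (borel M) R).
Local Notation dirac_at x := (@dirac _ (borel M) x R).
Variables (X : set M) (cX : compact X) (m : PM) (Pm : in_PX X m).
Hypothesis m_max : forall nu : PM, in_PX X nu -> (Var_bary X nu <= Var_bary X m)%E.
Variables (x0 : M) (Xx0 : X x0).

Let v := fine (Var_bary X m).
Let f y := fine (sqdist_int X m y).

Let VarE : Var_bary X m = v%:E.
Proof. by rewrite /v fineK// Var_bary_fin_num. Qed.

Let sqdist_intE y : sqdist_int X m y = (f y)%:E.
Proof. by rewrite /f fineK// sqdist_int_fin_num. Qed.

Lemma bary_mix_dirac_le {t : R} (t0 : 0 < t) (t1 : t <= 1) {y} :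
  is_bary X (mix_prob m (dirac_at x0) (ltW t0) t1) y ->
  dist x0 y ^+ 2 <= v /\ (1 - t) * f y <= v.
Proof.
move=> by_mix.
have := m_max _ (in_PX_mix_dirac X (ltW t0) t1 Pm Xx0).
rewrite -by_mix sqdist_int_mix_dirac// sqdist_intE VarE -!EFinM -EFinD lee_fin.
have := Var_bary_le_sqdist_int X m y; rewrite sqdist_intE VarE lee_fin.
have := sqr_ge0 (dist x0 y); have : 0 <= 1 - t by rewrite subr_ge0.
move=> t1' d0 vf hmix; split; last by nra.
by rewrite -(ler_pM2l t0); nra.
Qed.

Lemma max_Var_unique_bary_dist_le b :
  (forall mu : PM, in_PX X mu -> exists y, is_bary X mu y) ->
  compact (conv_bary X) -> (forall y, is_bary X m y -> y = b) ->
  ((dist x0 b ^+ 2)%:E <= Var_bary X m)%E.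
Proof.
move=> has_bary cC ub.
pose t n : R := n.+2%:R^-1.
have t0 n : 0 < t n by rewrite invr_gt0.
have t1 n : t n <= 1 by rewrite invf_le1// ler1n.
pose nu n : PM := mix_prob m (dirac_at x0) (ltW (t0 n)) (t1 n).
have [y bary_y] := choice (fun n => has_bary _ (in_PX_mix_dirac X (ltW (t0 n)) (t1 n) Pm Xx0)).
have [y0 [_ cl]] : conv_bary X `&` cluster (y @ \oo) !=set0.
  apply: cC; apply: (@filterE _ \oo) => n; exists (nu n).
  by split; [exact: in_PX_mix_dirac | exact: bary_y].
have v0 : 0 <= v by rewrite -lee_fin -VarE Var_bary_ge0.
have d_le : dist x0 y0 ^+ 2 <= v.
  apply: (cluster_le_of_lsc (fun z => dist x0 z ^+ 2) _ _ _ v0 cl).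
    move=> e e0; near=> n; have [+ _] := bary_mix_dirac_le (t0 n) (t1 n) (bary_y n).
    by move=> /le_trans; apply; rewrite lerDl ltW.
  by move=> z e e0 ze; exact: mdist_sqr_shift.
have f_le : f y0 <= v.
  apply: (cluster_le_of_lsc _ _ _ _ v0 cl).
    move=> e e0; near=> n; have [_] := bary_mix_dirac_le (t0 n) (t1 n) (bary_y n).
    apply: ler_add_of_1Binv_mul_le => //; near: n; exact: nbhs_infty_gtr.
  move=> z e e0 ze; have := sqdist_int_shift X cX Pm e0 ze.
  by rewrite !sqdist_intE -EFinM -EFinD lee_fin.
have bary_y0 : is_bary X m y0.
  by apply/le_anti; rewrite Var_bary_le_sqdist_int sqdist_intE VarE lee_fin f_le.
by rewrite -(ub _ bary_y0) VarE lee_fin.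
Unshelve. all: by end_near.
Qed.

End variance_maximizer.

Section net_partition.
Context {R : realType} {M : pointedMetricType R}.
Local Notation dist := (@mdist R M).

Lemma compact_mdist_net {X : set M} {e} : compact X -> 0 < e ->
  exists s : seq M, {subset s <= X} /\
    forall x, X x -> exists2 z, z \in s & dist z x < e.
Proof.
move=> cX e0; move: cX; rewrite compact_cover => cX.
have [|x Xx|D DX XD] := cX M X (fun z => [set w | dist z w < e]).
- by move=> z _; exact: open_mball.
- by exists x => //=; rewrite mdistxx.
exists (finmap.enum_fset D); split; first by move=> z /DX; rewrite inE.
by move=> x /XD [z /= zD zx]; exists z.
Qed.

Variables (z : nat -> M) (e : R).

Definition net_cell i := [set x | dist (z i) x < e] `\`
  \bigcup_(j in [set j | (j < i)%N]) [set x | dist (z j) x < e].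

Lemma measurable_net_cell i : measurable (net_cell i : set (borel M)).
Proof.
apply: measurableD; first by apply: open_borel; exact: open_mball.
by apply: bigcup_measurable => j _; apply: open_borel; exact: open_mball.
Qed.

Lemma net_cellP n x : (exists2 k, (k < n)%N & dist (z k) x < e) ->
  exists j : 'I_n, forall i : 'I_n, (x \in net_cell i) = (i == j).
Proof.
move=> [k kn zkx]; have exP : exists k, (k < n)%N && (dist (z k) x < e).
  by exists k; rewrite kn zkx.
case: (ex_minnP exP) => j /andP[jn zjx] jmin; exists (Ordinal jn) => i.
apply/idP/eqP => [|->]; rewrite inE.
- move=> [zix nB]; apply/val_inj/eqP => /=.
  rewrite eqn_leq jmin ?ltn_ord ?zix ?andbT//.
  by rewrite leqNgt; apply/negP => ji; apply: nB; exists j.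
- split=> // -[j' /= j'j zj'x].
  by have := jmin j'; rewrite (ltn_trans j'j jn) zj'x leqNgt j'j => /(_ isT).
Qed.

End net_partition.

Section discretization.
Context {R : realType} {M : pointedMetricType R}.
Local Notation dist := (@mdist R M).
Local Notation PM := (probability (borel M) R).
Context {X : set M} (cX : compact X).

Let mX : measurable (X : set (borel M)).
Proof. exact: compact_borel (@metric_hausdorff R M) cX. Qed.

Lemma Var_bary_le_discrete (mu : PM) e : in_PX X mu -> 0 < e ->
  exists n (p : 'I_n -> R) (z : 'I_n -> M),
  [/\ forall i, 0 <= p i, \sum_i p i = 1, forall i, X (z i) &
      forall y, (Var_bary X mu <=
        (\sum_i p i * ((1 + e) * dist (z i) y ^+ 2 + (e + e ^+ 2)))%:E)%E].
Proof.
move=> PX e0; have [s [sX snet]] := compact_mdist_net cX e0.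
pose z i := nth point s i.
pose A (i : 'I_(size s)) := net_cell z e i.
have mA i : measurable (A i : set (borel M)) by exact: measurable_net_cell.
have cellX x : X x -> exists j : 'I_(size s), forall i, (x \in A i) = (i == j).
  move=> Xx; apply: net_cellP; have [w ws wx] := snet x Xx.
  by exists (index w s); rewrite ?index_mem// /z nth_index.
pose p i := fine (mu (A i `&` X)).
exists (size s), p, z; split.
- by move=> i; apply/fine_ge0/measure_ge0.
- apply/EFin_inj.
  have muX : (mu : {measure set (borel M) -> \bar R}) X = 1%E := PX.
  rewrite -muX -[RHS]mul1e -integral_cst//.
  under eq_bigr do rewrite -[p _]mulr1.
  rewrite -integral_sum_indic//; apply: eq_integral => x /[!inE] /cellX [j hj].
  by rewrite (sum_indic_uniq _ hj).
- by move=> i; move/sX: (mem_nth point (ltn_ord i)); rewrite inE.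
move=> y; apply: le_trans (Var_bary_le_sqdist_int X mu y) _.
have g0 i : (0 <= (1 + e) * dist (z i) y ^+ 2 + (e + e ^+ 2))%R.
  by have := sqr_ge0 (dist (z i) y); nra.
rewrite /p -integral_sum_indic//; apply: ge0_le_integral => //.
- by move=> x _; rewrite lee_fin sqr_ge0.
- by apply/measurable_EFinP; exact: measurable_mdist_sqrl.
- apply/measurable_EFinP; apply: measurable_sum => i.
  by apply: measurable_funM => //; exact: measurable_indic.
move=> x /cellX [j hj]; rewrite (sum_indic_uniq _ hj) lee_fin.
have : x \in A j by rewrite hj.
by rewrite inE => -[zjx _]; rewrite !(metric_sym _ y) mdist_sqr_shift.
Qed.

Lemma Var_bary_le_W2 (mu nu : PM) c : in_PX X mu -> 0 <= c ->
  (forall x, X x -> (\int[nu]_y (dist x y ^+ 2)%:E <= c%:E)%E) ->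
  (Var_bary X mu <= c%:E)%E.
Proof.
move=> PX c0 hc; rewrite -(fineK (Var_bary_fin_num X cX mu)) lee_fin.
apply: (@ler_add_small_mulr _ _ _ (c + 2)) => [|e e0 e1]; first by rewrite addr_ge0.
have [n [p [z [p0 p1 Xz hVar]]]] := Var_bary_le_discrete _ _ PX e0.
pose g i y := (1 + e) * dist (z i) y ^+ 2 + (e + e ^+ 2).
have g0 i y : 0 <= g i y by have := sqr_ge0 (dist (z i) y); rewrite /g; nra.
have mg i : @measurable_fun _ _ (borel M) _ setT (g i).
  apply: measurable_funD => //; apply: measurable_funM => //.
  exact: measurable_mdist_sqrr.
have gK i : (\int[nu]_y (g i y)%:E <= ((1 + e) * c + (e + e ^+ 2))%:E)%E.
  rewrite ge0_integral_affine//; last 4 first.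
  - exact: measurable_mdist_sqrr.
  - by move=> y _; exact: sqr_ge0.
  - by rewrite addr_ge0// ltW.
  - by rewrite addr_ge0 ?sqr_ge0// ltW.
  have nuT : (nu : {measure set (borel M) -> \bar R}) setT = 1%E.
    exact: probability_setT.
  rewrite nuT mule1 [in leRHS]EFinD leeD2r// EFinM lee_wpmul2l ?lee_fin ?hc//.
  by rewrite addr_ge0// ltW.
have := ge0_integral_convex_comb_le nu measurableT p0 p1 (fun i => mg i)
  (fun i y _ => g0 i y) gK.
move=> intK; have vK : fine (Var_bary X mu) <= (1 + e) * c + (e + e ^+ 2).
  rewrite -lee_fin; apply: le_trans intK; apply: le_integral_probability.
  - by apply: measurable_sum => i; exact: measurable_funM.
  - exact/fine_ge0/Var_bary_ge0.
  - by move=> y; rewrite -lee_fin fineK ?Var_bary_fin_num ?hVar.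
by apply: le_trans vK _; rewrite expr2; nra.
Qed.

End discretization.

Section circumradius.
Context {R : realType} {M : pointedMetricType R}.
Local Notation dist := (@mdist R M).
Local Notation PM := (probability (borel M) R).
Local Open Scope ereal_scope.

Lemma sqrte_EFin_sqr {r : R} : (0 <= r)%R -> sqrte (r ^+ 2)%:E = r%:E.
Proof. by move=> r0; rewrite EFin_expe sqrte_sqr gee0_abs// lee_fin. Qed.

Lemma W2_dirac_dirac x y : W2_dirac x (@dirac _ (borel M) y R) = (dist x y)%:E.
Proof.
rewrite /W2_dirac integral_dirac//; last first.
  by apply/measurable_EFinP; exact: measurable_mdist_sqrr.
by rewrite diracE mem_set// mul1e sqrte_EFin_sqr// mdist_ge0.
Qed.

Lemma circumradius_iX_le_circumradius (X : set M) : circumradius_iX X <= circumradius X.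
Proof.
apply/ereal_infP => _ [y _ <-]; apply: ereal_inf_lbound.
exists (@dirac _ (borel M) y R) => //; congr ereal_sup.
by apply: eq_imagel => x _; exact: W2_dirac_dirac.
Qed.

Lemma circumradius_le_sqrte (X : set M) b c :
  (forall x, X x -> (dist x b ^+ 2)%:E <= c) -> circumradius X <= sqrte c.
Proof.
move=> Xb; apply: le_trans (ereal_inf_lbound _) _; first by exists b.
apply/ereal_supP => _ [x Xx <-].
rewrite -sqrte_EFin_sqr ?mdist_ge0// lee_sqrt ?Xb//.
by apply: le_trans (Xb x Xx); rewrite lee_fin sqr_ge0.
Qed.

Lemma sqrte_Var_bary_le_circumradius_iX {X : set M} {mu : PM} :
  compact X -> in_PX X mu -> sqrte (Var_bary X mu) <= circumradius_iX X.
Proof.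
move=> cX PX; apply/ereal_infP => _ [nu _ <-].
have [x1 Xx1] : X !=set0.
  apply/set0P/negP => /eqP X0; move: PX; rewrite /in_PX X0 measure0 => -[].
  by move=> /esym/eqP; rewrite oner_eq0.
set S := ereal_sup _.
have WS x : X x -> W2_dirac x nu <= S by move=> Xx; apply: ereal_sup_ubound; exists x.
have : 0 <= S by apply: le_trans (WS x1 Xx1); exact: sqrte_ge0.
case: S WS => [s| |] // WS; last by move=> _; exact: leey.
rewrite lee_fin => s0; rewrite -(sqrte_EFin_sqr s0) lee_sqrt ?lee_fin ?sqr_ge0//.
apply: (Var_bary_le_W2 cX mu nu _ PX) => [|x Xx]; first exact: sqr_ge0.
by have := WS x Xx; rewrite /W2_dirac -(sqrte_EFin_sqr s0) lee_sqrt// lee_fin sqr_ge0.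
Qed.

End circumradius.

Local Open Scope ereal_scope.

Theorem corollary3p2 (R : realType) (M : pointedMetricType R) (X : set M) :
  @complete_metric R M ->
  compact X ->
  (forall mu : probability (borel M) R, in_PX X mu ->
     exists y : M, is_bary X mu y) ->
  compact (conv_bary X) ->
  (exists mu : probability (borel M) R,
     [/\ in_PX X mu,
         (forall nu : probability (borel M) R, in_PX X nu -> Var_bary X nu <= Var_bary X mu) &
         exists! y : M, is_bary X mu y]) ->
  circumradius X = circumradius_iX X.
Proof.
move=> _ cX has_bary cC [m [Pm m_max [b [_ ub]]]].
apply/le_anti; rewrite circumradius_iX_le_circumradius andbT.
apply: le_trans _ (sqrte_Var_bary_le_circumradius_iX cX Pm).
apply: (circumradius_le_sqrte X b) => x Xx.
by apply: max_Var_unique_bary_dist_le => // y /ub ->.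
Qed.
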